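(* Let $f_1,\dots,f_m\in\mathbb{C}[x_1,\dots,x_n]$ with $r$ solutions, and suppose a sparse-resultant solver is given by a square matrix $$\mathbf{M}(u_0)=\begin{bmatrix}\hat{\mathbf{A}}_{11}&\hat{\mathbf{A}}_{12}\\ \mathbf{A}_{21}-u_0\mathbf{I}&\mathbf{A}_{22}\end{bmatrix}$$ as described in the context, with $\hat{\mathbf{A}}_{12}$ square invertible, $|B_1|=r$, and Schur complement $\mathbf{X}=\mathbf{A}_{21}-\mathbf{A}_{22}\hat{\mathbf{A}}_{12}^{-1}\hat{\mathbf{A}}_{11}$. Define an action-matrix solver for the action polynomial $f=x_1$ by taking the basis monomials $B_a=B_1$, the reducible monomials $B_r=\{x_1\mathbf{x}^{\beta}\mid \mathbf{x}^{\beta}\in B_1\}\setminus B_1$, the excess monomials $B_e=B_2\setminus B_r$, the same monomial multiples for $f_1,\dots,f_m$ as in the resultant construction, the same monomial ordering, and the elimination template $\hat{\mathbf{C}}=\begin{bmatrix}\hat{\mathbf{A}}_{12}&\hat{\mathbf{A}}_{11}\end{bmatrix}$ (columns indexed by $\mathbf{b}_2$ then $\mathbf{b}_1$). Let $\mathbf{M}_f$ be the resulting action matrix. Then the two solvers are equivalent: the Gauss–Jordan form of $\hat{\mathbf{C}}$ is $\begin{bmatrix}\mathbf{I}&\hat{\mathbf{A}}_{12}^{-1}\hat{\mathbf{A}}_{11}\end{bmatrix}$, so the Gauss–Jordan elimination can be replaced by the product $\hat{\mathbf{A}}_{12}^{-1}\hat{\mathbf{A}}_{11}$, and $\mathbf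{M}_f=\mathbf{X}$.
   Context: Setting of the sparse-resultant solver: $B=B_1\sqcup B_2$ is a finite set of monomials in $x_1,\dots,x_n$ with $B_1=\{\mathbf{x}^{\beta}\in B\mid x_1\mathbf{x}^{\beta}\in B\}$, ordered as vectors $\mathbf{b}_1=(\mathbf{x}^{\beta_1},\dots,\mathbf{x}^{\beta_r})$ and $\mathbf{b}_2$; the columns of $\mathbf{M}(u_0)$ are indexed by $\mathbf{b}_1$ followed by $\mathbf{b}_2$. The upper block $\begin{bmatrix}\hat{\mathbf{A}}_{11}&\hat{\mathbf{A}}_{12}\end{bmatrix}$ consists of coefficient vectors of polynomials $t f_i$ ($i\le m$, $t$ in chosen sets $T_i$ of monomials), and the $j$-th row of the lower block $\begin{bmatrix}\mathbf{A}_{21}-u_0\mathbf{I}&\mathbf{A}_{22}\end{bmatrix}$ is the coefficient vector of $\mathbf{x}^{\beta_j}(x_1-u_0)$ (extra polynomial $x_1-u_0$). It is assumed that the cosets of the monomials of $B_1$ form a linear basis of the $r$-dimensional quotient ring $\mathbb{C}[x_1,\dots,x_n]/\langle f_1,\dots,f_m\rangle$. Action matrix read-off: writing the Gauss–Jordan form of $\hat{\mathbf{C}}$ as $\begin{bmatrix}\mathbf{I}&\mathbf{G}\end{bmatrix}$ with rows of $\mathbf{G}$ indexed by the monomials of $\mathbf{b}_2$, let $\mathbf{C}'_{23}$ be the rows of $\mathbf{G}$ indexed by $B_r$; the $r\times r$ matrix $\mathbf{M}_f$ has $j$-th row equal to the $i$-th unit row vector if $x_1\mathbf{x}^{\beta_j}=\mathbf{x}^{\beta_i}\in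 B_1$, and otherwise equal to minus the row of $\mathbf{C}'_{23}$ indexed by $x_1\mathbf{x}^{\beta_j}\in B_r$. *)

From HB Require Import structures.
From mathcomp Require Import all_boot all_order all_algebra.
From mathcomp Require Import reals.
From mathcomp Require Import complex.
From mathcomp Require Import mpoly.

Set Implicit Arguments.
Unset Strict Implicit.
Unset Printing Implicit Defensive.

Import Order.TTheory GRing.Theory Num.Theory.
Local Open Scope ring_scope.

Definition is_pivot (F : fieldType) (p q : nat) (R : 'M[F]_(p, q))
    (i : 'I_p) (j : 'I_q) : Prop :=
  R i j != 0 /\ forall k : 'I_q, (k < j)%N -> R i k = 0.

Definition is_rref (F : fieldType) (p q : nat) (R : 'M[F]_(p, q)) : Prop :=
  (forall i1 i2 : 'I_p, (i1 < i2)%N -> row i1 R = 0 -> row i2 R = 0) /\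
  (forall (i1 i2 : 'I_p) (j1 j2 : 'I_q), (i1 < i2)%N ->
     is_pivot R i1 j1 -> is_pivot R i2 j2 -> (j1 < j2)%N) /\
  (forall (i : 'I_p) (j : 'I_q), is_pivot R i j ->
     R i j = 1 /\ forall i' : 'I_p, i' != i -> R i' j = 0).

(* R is the Gauss-Jordan form of A: R is in reduced row echelon form and is
   obtained from A by elementary row operations, i.e. R = P A, P invertible *)
Definition gauss_jordan_form (F : fieldType) (p q : nat)
    (A R : 'M[F]_(p, q)) : Prop :=
  is_rref R /\ exists P : 'M[F]_p, P \in unitmx /\ R = P *m A.

Definition in_ideal (F : fieldType) (n m : nat) (f : 'I_m -> {mpoly F[n]})
    (p : {mpoly F[n]}) : Prop :=
  exists g : 'I_m -> {mpoly F[n]}, p = \sum_(i < m) g i * f i.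

Definition cosets_basis (F : fieldType) (n m r : nat)
    (f : 'I_m -> {mpoly F[n]}) (b : 'I_r -> 'X_{1..n}) : Prop :=
  (forall p : {mpoly F[n]}, exists c : 'I_r -> F,
      in_ideal f (p - \sum_(j < r) c j *: 'X_[b j])) /\
  (forall c : 'I_r -> F,
      in_ideal f (\sum_(j < r) c j *: 'X_[b j]) -> forall j, c j = 0).

(* x_1 is the variable of index ord0 *)
Definition x1mon (n : nat) : 'X_{1..n.+1} := U_(ord0)%MM.

(* Action matrix read-off (action polynomial x_1) from the matrix G whose rows
   are indexed by b_2, as in the context: row j is the i-th unit row if
   x_1 b1_j = b1_i in B_1; otherwise it is minus the row of G (equivalently of
   C'_23, the rows of G indexed by B_r) indexed by x_1 b1_j in B_r. *)
Definition action_matrix (F : fieldType) (n r s : nat)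
    (b1 : 'I_r -> 'X_{1..n.+1}) (b2 : 'I_s -> 'X_{1..n.+1})
    (G : 'M[F]_(s, r)) : 'M[F]_r :=
  \matrix_(j < r)
    match [pick i : 'I_r | b1 i == (x1mon n + b1 j)%MM] with
    | Some i => delta_mx (0 : 'I_1) i
    | None =>
      match [pick k : 'I_s | b2 k == (x1mon n + b1 j)%MM] with
      | Some k => - row k G
      | None => 0
      end
    end.

Definition inB (n r s : nat) (b1 : 'I_r -> 'X_{1..n}) (b2 : 'I_s -> 'X_{1..n})
    (mo : 'X_{1..n}) : bool :=
  [exists i, b1 i == mo] || [exists k, b2 k == mo].

From HB Require Import structures.
From mathcomp Require Import all_boot all_order all_algebra.
From mathcomp Require Import reals complex mpoly.
From mathcomp Require Import zify.

(* Multiplying [Â12 Â11] on the left by Â12^-1 yields [I Â12^-1 Â11], which is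
   in reduced row echelon form. Conversely, if P [Â12 Â11] is reduced with P
   invertible, its invertible left block P Â12 puts a pivot in every row; the
   pivot columns strictly increase, so the left block is the identity and
   P = Â12^-1. Finally, since every x_1 x^beta_j lies in B, the lower block
   [A21 A22] is the matrix of multiplication by x_1, and reading the action
   matrix off G = Â12^-1 Â11 reproduces A21 - A22 G row by row. *)

Set Implicit Arguments.
Unset Strict Implicit.
Unset Printing Implicit Defensive.

Import GRing.Theory.
Local Open Scope ring_scope.

Lemma homo_ord_ge s (p : 'I_s -> 'I_s) :
  {homo p : i j / (i < j)%N} -> forall i : 'I_s, (i <= p i)%N.
Proof.
move=> p_incr [k lt_ks]; elim: k lt_ks => // k IHk lt_k1s.
exact: leq_ltn_trans (IHk (ltnW lt_k1s))
                     (p_incr (Ordinal (ltnW lt_k1s)) (Ordinal lt_k1s) (ltnSn k)).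
Qed.

Lemma homo_ord_id s (p : 'I_s -> 'I_s) :
  {homo p : i j / (i < j)%N} -> p =1 id.
Proof.
move=> p_incr i; apply/ord_inj/eqP; rewrite eqn_leq homo_ord_ge // andbT.
(* Conjugating by rev_ord turns the lower bound into an upper bound. *)
pose q i := rev_ord (p (rev_ord i)).
have q_incr : {homo q : i j / (i < j)%N}.
  move=> i1 i2 lt_i12; rewrite /= ltn_sub2lE // ltnS.
  by apply: p_incr; rewrite /= ltn_sub2lE.
have := homo_ord_ge q_incr (rev_ord i); rewrite /q rev_ordK /=.
by have := ltn_ord (p i); have := ltn_ord i; lia.
Qed.

Section GaussJordan.
Variables (F : fieldType) (s r : nat).

Lemma is_pivot_row_mx1 (Y : 'M[F]_(s, r)) i j :
  is_pivot (row_mx 1%:M Y) i j <-> j = lshift r i.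
Proof.
split=> [[+ zero_before]|->]; last first.
  split=> [|k lt_ki]; first by rewrite row_mxEl mxE eqxx oner_neq0.
  have lt_ks : (k < s)%N := ltn_trans lt_ki (ltn_ord i).
  have -> : k = lshift r (Ordinal lt_ks) by apply: ord_inj.
  by rewrite row_mxEl mxE eq_sym; case: eqP => // ki; rewrite -ki ltnn in lt_ki.
case: (splitP j) => [k jk|k jk].
  have -> : j = lshift r k by apply: ord_inj.
  rewrite row_mxEl mxE.
  by have [->|_] := eqVneq i k; rewrite ?eqxx.
have lt_ij : (lshift r i < j)%N by rewrite jk /= ltn_addr.
by move: (zero_before _ lt_ij); rewrite row_mxEl mxE eqxx => /eqP; rewrite oner_eq0.
Qed.

Lemma is_rref_row_mx1 (Y : 'M[F]_(s, r)) : is_rref (row_mx 1%:M Y).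
Proof.
split; [|split].
- move=> i1 i2 _ /rowP/(_ (lshift r i1)).
  by rewrite mxE row_mxEl !mxE eqxx => /eqP; rewrite oner_eq0.
- by move=> i1 i2 j1 j2 lt_i12 /is_pivot_row_mx1 -> /is_pivot_row_mx1 ->.
- move=> i j /is_pivot_row_mx1 ->; rewrite row_mxEl mxE eqxx.
  by split=> // i' ne_i'i; rewrite row_mxEl mxE (negbTE ne_i'i).
Qed.

Lemma unitmx_row_mx_pivot (Q : 'M[F]_s) (Z : 'M[F]_(s, r)) i :
  Q \in unitmx -> exists j, is_pivot (row_mx Q Z) i (lshift r j).
Proof.
move=> uQ; have [j0 nz_ij0] : exists j0, Q i j0 != 0.
  apply/existsP; apply: contraLR uQ => /existsPn zero_row.
  rewrite unitmxE (expand_det_row _ i) big1 ?unitr0 // => j _.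
  by rewrite (eqP (negbNE (zero_row j))) mul0r.
case: (@arg_minnP _ j0 (fun j => Q i j != 0) (@nat_of_ord s) nz_ij0) => j nz_ij min_j.
exists j; split=> [|k lt_kj]; first by rewrite row_mxEl.
have lt_ks : (k < s)%N := ltn_trans lt_kj (ltn_ord j).
have -> : k = lshift r (Ordinal lt_ks) by apply: ord_inj.
rewrite row_mxEl; apply: contraTeq lt_kj => /min_j.
by rewrite -leqNgt.
Qed.

Lemma rref_row_mx_unitmx (Q : 'M[F]_s) (Z : 'M[F]_(s, r)) :
  is_rref (row_mx Q Z) -> Q \in unitmx -> Q = 1%:M.
Proof.
move=> [_ [pivots_incr pivots_unit]] uQ.
have [p pivot_p] := fin_all_exists (fun i => unitmx_row_mx_pivot Z i uQ).
have p_id : p =1 id.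
  apply: homo_ord_id => i1 i2 lt_i12.
  exact: pivots_incr lt_i12 (pivot_p i1) (pivot_p i2).
apply/matrixP => i k; have [one_kk zero_col] := pivots_unit _ _ (pivot_p k).
rewrite p_id in one_kk zero_col.
rewrite mxE; have [->|ne_ik] := eqVneq i k; first by rewrite -one_kk row_mxEl.
by have := zero_col i ne_ik; rewrite row_mxEl.
Qed.

Lemma gauss_jordan_form_row_mx_unitmx (A : 'M[F]_s) (B : 'M[F]_(s, r)) GJ :
  A \in unitmx ->
  gauss_jordan_form (row_mx A B) GJ <-> GJ = row_mx 1%:M (invmx A *m B).
Proof.
move=> uA; split=> [[rref_GJ [P [uP eGJ]]]|->]; last first.
  split; first exact: is_rref_row_mx1.
  by exists (invmx A); rewrite unitmx_inv mul_mx_row mulVmx.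
move: rref_GJ; rewrite {}eGJ mul_mx_row => rref_PAB.
have PA1 : P *m A = 1%:M.
  by apply: (rref_row_mx_unitmx rref_PAB); rewrite unitmx_mul uP.
have -> : P = invmx A by rewrite -[P]mulmx1 -(mulmxV uA) mulmxA PA1 mul1mx.
by rewrite mulVmx.
Qed.
End GaussJordan.

Section ActionMatrix.
Variables (F : fieldType) (n r s : nat).
Variables (b1 : 'I_r -> 'X_{1..n.+1}) (b2 : 'I_s -> 'X_{1..n.+1}).

Definition mulX1_mx p q (b : 'I_p -> 'X_{1..n.+1}) (c : 'I_q -> 'X_{1..n.+1}) :
  'M[F]_(p, q) := \matrix_(j, i) ((x1mon n + b j)%MM == c i)%:R.

Lemma mcoeff_mulX_X0_subC (b m : 'X_{1..n.+1}) (u : F) :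
  ('X_[b] * ('X_ord0 - u%:MP))@_m = ((x1mon n + b)%MM == m)%:R - u * (b == m)%:R.
Proof.
by rewrite mulrBr -mpolyXD mulrC mul_mpolyC mcoeffB mcoeffZ !mcoeffX addmC.
Qed.

Lemma coef_mx_mulX1_subC_b1 (u : F) (A : 'M[F]_r) : injective b1 ->
  (forall j i, (A - u%:M) j i = ('X_[b1 j] * ('X_ord0 - u%:MP))@_(b1 i)) ->
  A = mulX1_mx b1 b1.
Proof.
move=> inj_b1 coefA; apply/matrixP => j i; have := coefA j i.
by rewrite mcoeff_mulX_X0_subC (inj_eq inj_b1) !mxE mulr_natr => /subIr.
Qed.

Lemma coef_mx_mulX1_subC_b2 (u : F) (A : 'M[F]_(r, s)) :
  (forall j k, b1 j != b2 k) ->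
  (forall j k, A j k = ('X_[b1 j] * ('X_ord0 - u%:MP))@_(b2 k)) ->
  A = mulX1_mx b1 b2.
Proof.
move=> b1_neq_b2 coefA; apply/matrixP => j k.
by rewrite coefA mcoeff_mulX_X0_subC (negbTE (b1_neq_b2 j k)) mulr0 subr0 mxE.
Qed.

Lemma action_matrix_mulX1 (G : 'M[F]_(s, r)) :
  injective b1 -> injective b2 -> (forall j k, b1 j != b2 k) ->
  (forall j, inB b1 b2 (x1mon n + b1 j)%MM) ->
  action_matrix b1 b2 G = mulX1_mx b1 b1 - mulX1_mx b1 b2 *m G.
Proof.
move=> inj_b1 inj_b2 b1_neq_b2 x1B1_in_B; apply/matrixP => j i; rewrite !mxE.
case: pickP => [i' /eqP b1i'E|no_b1].
  rewrite !mxE -b1i'E (inj_eq inj_b1) eq_sym big1 ?subr0 // => k _.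
  by rewrite mxE -b1i'E (negbTE (b1_neq_b2 _ _)) mul0r.
case: pickP => [k /eqP b2kE|no_b2].
  rewrite !mxE -b2kE eq_sym (negbTE (b1_neq_b2 _ _)) sub0r (bigD1 k) //=.
  rewrite mxE -b2kE eqxx mul1r big1 ?addr0 // => k' ne_k'k.
  by rewrite mxE -b2kE (inj_eq inj_b2) eq_sym (negbTE ne_k'k) mul0r.
by case/orP: (x1B1_in_B j) => /existsP [x /eqP x1b1jE];
  [have := no_b1 x | have := no_b2 x]; rewrite x1b1jE eqxx.
Qed.
End ActionMatrix.

Theorem proposition3 (R : realType) (n m r s : nat)
    (f : 'I_m -> {mpoly (complex R)[n.+1]})
    (b1 : 'I_r -> 'X_{1..n.+1}) (b2 : 'I_s -> 'X_{1..n.+1})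
    (src : 'I_s -> 'I_m * 'X_{1..n.+1})
    (u0 : complex R)
    (A11h : 'M[complex R]_(s, r)) (A12h : 'M[complex R]_s)
    (A21 : 'M[complex R]_r) (A22 : 'M[complex R]_(r, s)) :
  (* B = B_1 ⊔ B_2, listed without repetition by b1 and b2 *)
  injective b1 -> injective b2 -> (forall j k, b1 j != b2 k) ->
  (* B_1 = {x^beta in B | x_1 x^beta in B} *)
  (forall j, inB b1 b2 (x1mon n + b1 j)%MM) ->
  (forall k, ~~ inB b1 b2 (x1mon n + b2 k)%MM) ->
  (* the cosets of B_1 form a basis of C[x]/<f_1,...,f_m> (of dimension r) *)
  cosets_basis f b1 ->
  (* row k of the upper block is the coefficient vector of t f_i,
     where (i, t) = src k; these polynomials are supported in B *)
  (forall k, {subset msupp ('X_[(src k).2] * f (src k).1) <= inB b1 b2}) ->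
  (forall k j, A11h k j = ('X_[(src k).2] * f (src k).1)@_(b1 j)) ->
  (forall k l, A12h k l = ('X_[(src k).2] * f (src k).1)@_(b2 l)) ->
  (* row j of the lower block [A21 - u0 I, A22] is the coefficient vector of
     x^beta_j (x_1 - u0) *)
  (forall j i, (A21 - u0%:M) j i = ('X_[b1 j] * ('X_ord0 - u0%:MP))@_(b1 i)) ->
  (forall j k, A22 j k = ('X_[b1 j] * ('X_ord0 - u0%:MP))@_(b2 k)) ->
  (* \hat A_12 is invertible *)
  A12h \in unitmx ->
  let X := A21 - A22 *m invmx A12h *m A11h in
  let C := row_mx A12h A11h in
  gauss_jordan_form C (row_mx 1%:M (invmx A12h *m A11h)) /\
  (forall GJ : 'M[complex R]_(s, s + r), gauss_jordan_form C GJ ->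
     GJ = row_mx 1%:M (invmx A12h *m A11h) /\
     action_matrix b1 b2 (rsubmx GJ) = X).
Proof.
move=> inj_b1 inj_b2 b1_neq_b2 x1B1_in_B _ _ _ _ _ coefA21 coefA22 uA12 X C.
have GJ_C GJ := gauss_jordan_form_row_mx_unitmx A11h GJ uA12.
split=> [|GJ /GJ_C eGJ]; first exact/GJ_C.
split=> //; rewrite eGJ row_mxKr action_matrix_mulX1 // /X -mulmxA.
by rewrite (coef_mx_mulX1_subC_b1 inj_b1 coefA21) (coef_mx_mulX1_subC_b2 b1_neq_b2 coefA22).
Qed.
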